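(* Let $K$ be an infinite commutative domain and $R$ an associative $K$-algebra on which $K$ acts torsion-freely. Let $m,k,n\ge0$, $\alpha_0,\dots,\alpha_n\in K$, $\alpha=\sum_{i=0}^n\alpha_iy^ixy^{n-i}$, and suppose $y^m\alpha y^k=0$ for all $x,y\in R$. (i) If $\alpha_n\neq0$ then $y^{m+n}e_ny^k=0$ for all $x,y\in R$. (ii) If $\alpha_0\ne0$ then $y^me_ny^{n+k}=0$ for all $x,y\in R$. (iii) If $\alpha_0\neq0$ and $\alpha_n\neq0$ then $y^me_{3n-1}y^k=0$ for all $x,y\in R$.
   Context: $[a,b]=ab-ba$, $e_1=[x,y]$, $e_{j+1}=[e_j,y]$, and $e_0=x$. *)

From HB Require Import structures.
From mathcomp Require Import all_boot all_order all_algebra.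
Set Implicit Arguments. Unset Strict Implicit. Unset Printing Implicit Defensive.
Import Order.TTheory GRing.Theory Num.Theory.
Local Open Scope ring_scope.

Record is_assoc_alg (K : comRingType) (R : lmodType K) (mul : R -> R -> R) : Prop := {
  alg_mulA : associative mul;
  alg_mulDl : left_distributive mul +%R;
  alg_mulDr : right_distributive mul +%R;
  alg_scalerAl : forall (a : K) (u v : R), mul (a *: u) v = a *: mul u v;
  alg_scalerAr : forall (a : K) (u v : R), mul u (a *: v) = a *: mul u v
}.

Definition torsion_free (K : comRingType) (R : lmodType K) : Prop :=
  forall (a : K) (v : R), a *: v = 0 -> a = 0 \/ v = 0.

Definition infinite_type (T : eqType) : Prop := forall s : seq T, exists t, t \notin s.

(* sand mul y i u j = y^i u y^j  (y^0 u = u, no unit needed) *)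
Definition sand (R : Type) (mul : R -> R -> R) (y : R) (i : nat) (u : R) (j : nat) : R :=
  iter j (fun z => mul z y) (iter i (mul y) u).

Definition comm_br (R : zmodType) (mul : R -> R -> R) (a b : R) : R := mul a b - mul b a.

Fixpoint eng (R : zmodType) (mul : R -> R -> R) (x y : R) (j : nat) : R :=
  if j is j'.+1 then comm_br mul (eng mul x y j') y else x.

Definition alpha_poly (K : comRingType) (R : lmodType K) (mul : R -> R -> R)
  (n : nat) (al : nat -> K) (x y : R) : R :=
  \sum_(i < n.+1) al i *: sand mul y i x (n - i).

From HB Require Import structures.
From mathcomp Require Import all_boot all_order all_algebra.
From mathcomp Require Import ring zify.
Set Implicit Arguments. Unset Strict Implicit. Unset Printing Implicit Defensive.
Import GRing.Theory.
Local Open Scope ring_scope.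

(* Encode y^a x y^b by the monomial S^a T^b of K[S,T].  The polynomials whose
   encodings vanish for all x, y form an ideal; it contains S^m T^k P with
   P = sum_i alpha_i S^i T^(n-i), and e_j is encoded by (T - S)^j.  Replacing y
   by y + c y^2 substitutes S(1 + cS), T(1 + cT); as K is infinite and R is
   torsion-free, each coefficient in c of the result lies in the ideal
   (Vandermonde).  Writing 1 + cS = (1 + cT) + c(S - T), these coefficients are
   unitriangular combinations of polynomials S^m T^k (S - T)^j H_j, j <= n,
   which therefore all lie in the ideal; H_n = alpha_n S^n gives (i).  Part (ii) is (i) in the
   opposite algebra, and (iii) follows since every term of (T - S)^(2n-1) is
   divisible by S^n or T^n. *)

Lemma sum_coef_wide (S : nzSemiRingType) (V : nmodType) (F : nat -> S -> V)
    (p : {poly S}) N :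
  (forall i, F i 0 = 0) -> (size p <= N)%N ->
  \sum_(i < size p) F i p`_i = \sum_(i < N) F i p`_i.
Proof.
move=> F0 le_pN; rewrite (big_ord_widen N (fun i => F i p`_i) le_pN) big_mkcond.
by apply: eq_bigr => i _; case: ltnP => // /(nth_default 0) ->.
Qed.

Lemma sum_coefD (S : nzSemiRingType) (V : nmodType) (F : nat -> S -> V)
    (p q : {poly S}) :
  (forall i, F i 0 = 0) -> (forall i, {morph F i : u v / u + v}) ->
  \sum_(i < size (p + q)) F i (p + q)`_i =
  \sum_(i < size p) F i p`_i + \sum_(i < size q) F i q`_i.
Proof.
move=> F0 FD; set N := maxn (size p) (size q).
rewrite !(@sum_coef_wide _ _ _ _ N) ?leq_maxl ?leq_maxr ?size_polyD //.
by rewrite -big_split; apply: eq_bigr => i _; rewrite coefD FD.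
Qed.

Record ideal_pred (A : comNzRingType) (J : A -> Prop) : Prop := IdealPred {
  ideal0 : J 0;
  idealD : forall a b, J a -> J b -> J (a + b);
  idealMl : forall a b, J b -> J (a * b)
}.

Section Ideals.
Variables (A : comNzRingType) (J : A -> Prop).
Hypothesis idJ : ideal_pred J.

Lemma idealN a : J a -> J (- a).
Proof. by move=> Ja; rewrite -mulN1r; apply: idealMl. Qed.

Lemma idealB a b : J a -> J b -> J (a - b).
Proof. by move=> Ja Jb; apply: (idealD idJ) => //; apply: idealN. Qed.

Lemma ideal_sum I (r : seq I) (P : pred I) (F : I -> A) :
  (forall i, P i -> J (F i)) -> J (\sum_(i <- r | P i) F i).
Proof. by move=> JF; apply: big_ind => //; [apply: ideal0 | apply: idealD]. Qed.

Lemma ideal_mulr_pred c : ideal_pred (fun a => J (c * a)).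
Proof.
split=> [|a b Ja Jb|a b Jb]; first by rewrite mulr0; apply: ideal0.
  by rewrite mulrDr; apply: idealD.
by rewrite mulrCA; apply: idealMl.
Qed.

(* Each term of the binomial expansion contains a^n or b^n. *)
Lemma ideal_exprD c a b n N :
  J (c * a ^+ n) -> J (c * b ^+ n) -> ((2 * n).-1 <= N)%N -> J (c * (a + b) ^+ N).
Proof.
move=> Ja Jb le_nN; rewrite exprDn mulr_sumr; apply: ideal_sum => i _.
have [le_ni | lt_in] := leqP n i.
  rewrite -[X in b ^+ X](subnK le_ni) exprD.
  have -> : c * (a ^+ (N - i) * (b ^+ (i - n) * b ^+ n) *+ 'C(N, i)) =
      a ^+ (N - i) * b ^+ (i - n) *+ 'C(N, i) * (c * b ^+ n) by ring.
  exact: idealMl.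
have le_n_Ni : (n <= N - i)%N by lia.
rewrite -[X in a ^+ X](subnK le_n_Ni) exprD.
have -> : c * (a ^+ (N - i - n) * a ^+ n * b ^+ i *+ 'C(N, i)) =
    a ^+ (N - i - n) * b ^+ i *+ 'C(N, i) * (c * a ^+ n) by ring.
exact: idealMl.
Qed.

Lemma ideal_unitriangular (q : {poly A}) (W : nat -> {poly A}) (G : nat -> A) N :
  q = \sum_(c < N) 'X ^+ c * W c * (G c)%:P -> (forall c, (W c)`_0 = 1) ->
  (forall j, J q`_j) -> forall c, (c < N)%N -> J (G c).
Proof.
move=> -> W0 Jq; elim/ltn_ind=> c IH lt_cN.
have qcE : (\sum_(c' < N) 'X ^+ c' * W c' * (G c')%:P)`_c =
    G c + \sum_(c' < N | (c' < c)%N) (W c')`_(c - c') * G c'.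
  rewrite coef_sum (bigD1 (Ordinal lt_cN)) //= coefMC coefXnM ltnn subnn W0 mul1r.
  congr (_ + _); rewrite (bigID (fun c' : 'I_N => (c' < c)%N)) /= addrC big1 ?add0r.
    apply: eq_big => [c'|c' /andP[_ lt_c'c]].
      by apply/andb_idl => lt_c'c; rewrite -val_eqE /= ltn_eqF.
    by rewrite coefMC coefXnM ltnNge ltnW.
  move=> c' /andP[ne_c'c]; rewrite -leqNgt leq_eqVlt => /orP[/eqP eq_cc' | lt_cc'].
    by move: ne_c'c; rewrite -val_eqE /= eq_cc' eqxx.
  by rewrite coefMC coefXnM lt_cc' mul0r.
have := Jq c; rewrite qcE => Jsum.
rewrite -[G c](addrK (\sum_(c' < N | (c' < c)%N) (W c')`_(c - c') * G c')).
apply: idealB => //; apply: ideal_sum => c' lt_c'c.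
by apply: (idealMl idJ); apply: IH => //; apply: ltn_trans lt_cN.
Qed.

End Ideals.

Section SandwichEvaluation.
Variables (K : comNzRingType) (R : lmodType K) (mul : R -> R -> R).
Hypothesis algR : is_assoc_alg mul.
Local Notation A := {poly {poly K}}.

Lemma alg_mul0r u : mul 0 u = 0.
Proof. by apply: (@addrI _ (mul 0 u)); rewrite -(alg_mulDl algR) !addr0. Qed.

Lemma alg_mulr0 u : mul u 0 = 0.
Proof. by apply: (@addrI _ (mul u 0)); rewrite -(alg_mulDr algR) !addr0. Qed.

Lemma sandSr y i u j : sand mul y i u j.+1 = mul (sand mul y i u j) y.
Proof. by []. Qed.

Lemma sandSl y i u j : sand mul y i.+1 u j = mul y (sand mul y i u j).
Proof. by elim: j => [//|j IH]; rewrite !sandSr IH (alg_mulA algR). Qed.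

Lemma sandZ y i j c u : sand mul y i (c *: u) j = c *: sand mul y i u j.
Proof.
elim: j => [|j IH]; last by rewrite !sandSr IH (alg_scalerAl algR).
by elim: i => //= i IH; rewrite IH (alg_scalerAr algR).
Qed.

(* [sandw x y] maps the monomial S^a T^b, encoded as ('X^a * ('X%:P)^b), to y^a x y^b. *)
Definition sandw (x y : R) (Q : A) : R :=
  \sum_(a < size Q) \sum_(b < size Q`_a) Q`_a`_b *: sand mul y a x b.

Lemma sandwE x y (Q : A) N :
  (size Q <= N)%N ->
  sandw x y Q = \sum_(a < N) \sum_(b < size Q`_a) Q`_a`_b *: sand mul y a x b.
Proof.
move=> le_QN; rewrite /sandw.
apply: (@sum_coef_wide _ _
  (fun a (r : {poly K}) => \sum_(b < size r) r`_b *: sand mul y a x b)) => // a.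
by rewrite size_poly0 big_ord0.
Qed.

Lemma sum_coef_sand y a u (r : {poly K}) N :
  (size r <= N)%N ->
  \sum_(b < size r) r`_b *: sand mul y a u b = \sum_(b < N) r`_b *: sand mul y a u b.
Proof.
by move=> le_rN; apply: (@sum_coef_wide _ _ (fun b c => c *: sand mul y a u b)) => // b;
  rewrite scale0r.
Qed.

Lemma sandw_is_nmod_morphism x y : nmod_morphism (sandw x y).
Proof.
split=> [|P Q]; first by rewrite /sandw size_poly0 big_ord0.
rewrite /sandw (@sum_coefD _ _
  (fun a (r : {poly K}) => \sum_(b < size r) r`_b *: sand mul y a x b)) => [//|a|a r s].
  by rewrite size_poly0 big_ord0.
rewrite (@sum_coefD _ _ (fun b c => c *: sand mul y a x b)) // => [b|b c d].
  by rewrite scale0r.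
by rewrite scalerDl.
Qed.

HB.instance Definition _ x y :=
  GRing.isNmodMorphism.Build A R (sandw x y) (sandw_is_nmod_morphism x y).

Lemma alg_mul_suml I (r : seq I) (P : pred I) (F : I -> R) u :
  mul (\sum_(i <- r | P i) F i) u = \sum_(i <- r | P i) mul (F i) u.
Proof.
apply: (big_morph (mul^~ u)) => [v w|]; [exact: (alg_mulDl algR) | exact: alg_mul0r].
Qed.

Lemma alg_mul_sumr I (r : seq I) (P : pred I) (F : I -> R) u :
  mul u (\sum_(i <- r | P i) F i) = \sum_(i <- r | P i) mul u (F i).
Proof.
apply: (big_morph (mul u)) => [v w|]; [exact: (alg_mulDr algR) | exact: alg_mulr0].
Qed.

Lemma sandwZ x y c (Q : A) : sandw x y (c%:P%:P * Q) = c *: sandw x y Q.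
Proof.
rewrite mul_polyC (sandwE _ _ (size_scale_leq _ _)) /sandw scaler_sumr.
apply: eq_bigr => a _; rewrite coefZ mul_polyC (sum_coef_sand _ _ _ (size_scale_leq _ _)).
by rewrite scaler_sumr; apply: eq_bigr => b _; rewrite coefZ scalerA.
Qed.

Lemma sandw_mulX x y (Q : A) : sandw x y ('X * Q) = mul y (sandw x y Q).
Proof.
have le_XQ : (size ('X * Q)%R <= (size Q).+1)%N.
  by rewrite (leq_trans (size_polyMleq _ _)) // size_polyX.
rewrite (sandwE _ _ le_XQ) big_ord_recl coefXM eqxx size_poly0 big_ord0 add0r.
rewrite /sandw alg_mul_sumr; apply: eq_bigr => a _; rewrite coefXM /= alg_mul_sumr.
by apply: eq_bigr => b _; rewrite (alg_scalerAr algR) sandSl.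
Qed.

Lemma sandw_mulXC x y (Q : A) : sandw x y ('X%:P * Q) = mul (sandw x y Q) y.
Proof.
rewrite mul_polyC (sandwE _ _ (size_scale_leq _ _)) /sandw alg_mul_suml.
apply: eq_bigr => a _; rewrite coefZ alg_mul_suml.
have le_Xr : leq (size ('X * Q`_a)) (size Q`_a).+1.
  by rewrite (leq_trans (size_polyMleq _ _)) // size_polyX.
rewrite (sum_coef_sand _ _ _ le_Xr) big_ord_recl coefXM eqxx scale0r add0r.
by apply: eq_bigr => b _; rewrite coefXM /= (alg_scalerAl algR).
Qed.

Lemma sandw1 x y : sandw x y 1 = x.
Proof. by rewrite /sandw size_poly1 big_ord1 coef1 size_poly1 big_ord1 coef1 scale1r. Qed.

Lemma sandw_sand (Ls Rs : A) x y z :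
    (forall Q, sandw x y (Ls * Q) = mul z (sandw x y Q)) ->
    (forall Q, sandw x y (Rs * Q) = mul (sandw x y Q) z) ->
  forall a b Q, sandw x y (Ls ^+ a * Rs ^+ b * Q) = sand mul z a (sandw x y Q) b.
Proof.
move=> sandwL sandwR a b Q; elim: b => [|b IH].
  by rewrite mulr1; elim: a => [|a IH]; rewrite ?mul1r // exprS -mulrA sandwL IH sandSl.
by rewrite exprS mulrCA -mulrA sandwR IH.
Qed.

Definition sand_eng_poly a b j : A := 'X ^+ a * 'X%:P ^+ b * ('X%:P - 'X) ^+ j.

Lemma sandw_sand_eng_poly x y a b j :
  sandw x y (sand_eng_poly a b j) = sand mul y a (eng mul x y j) b.
Proof.
rewrite /sand_eng_poly (sandw_sand (z := y)) => [|Q|Q]; [|exact: sandw_mulX|exact: sandw_mulXC].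
congr sand; elim: j => [|j IH]; first by rewrite sandw1.
by rewrite exprS mulrBl raddfB /= sandw_mulXC sandw_mulX IH.
Qed.

Definition sandw_null (Q : A) : Prop := forall x y, sandw x y Q = 0.

Lemma sandw_null_ideal : ideal_pred sandw_null.
Proof.
split=> [x y|P Q nP nQ x y|P Q nQ]; first exact: raddf0.
  by rewrite raddfD /= nP nQ addr0.
elim/poly_ind: P => [|P c IH]; first by rewrite mul0r => x y; apply: raddf0.
rewrite mulrDl -mulrA mulrCA => x y; rewrite raddfD /= sandw_mulX IH alg_mulr0 add0r.
elim/poly_ind: c {IH} => [|c d IH]; first by rewrite mul0r raddf0.
by rewrite rmorphD rmorphM /= mulrDl -mulrA mulrCA raddfD /= sandw_mulXC IH alg_mul0r sandwZ nQ
  scaler0 addr0.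
Qed.

Lemma sand_eng_addn m k n N :
    (forall x y, sand mul y (m + n) (eng mul x y n) k = 0) ->
    (forall x y, sand mul y m (eng mul x y n) (n + k) = 0) ->
  ((2 * n).-1 <= N)%N -> forall x y, sand mul y m (eng mul x y (n + N)) k = 0.
Proof.
move=> eng_l eng_r le_nN x y; rewrite -sandw_sand_eng_poly; move: x y.
have -> : sand_eng_poly m k (n + N) = sand_eng_poly m k n * ('X%:P + - 'X) ^+ N.
  by rewrite /sand_eng_poly exprD mulrA.
apply: (ideal_exprD sandw_null_ideal) le_nN => [x y|].
  have -> : sand_eng_poly m k n * 'X%:P ^+ n = sand_eng_poly m (n + k) n.
    by rewrite /sand_eng_poly exprD; ring.
  by rewrite sandw_sand_eng_poly eng_r.
have -> : sand_eng_poly m k n * (- 'X) ^+ n = (-1) ^+ n * sand_eng_poly (m + n) k n.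
  by rewrite /sand_eng_poly exprD [(- 'X) ^+ n]exprNn; ring.
by apply: idealMl sandw_null_ideal _ _ _ => x y; rewrite sandw_sand_eng_poly eng_l.
Qed.

End SandwichEvaluation.

Arguments sand_eng_poly {K} a b j.

Section VandermondeExtraction.
Variables (K : idomainType) (R : lmodType K).
Hypotheses (infK : infinite_type K) (tfR : torsion_free R).

Lemma infinite_uniq_seq D : exists2 s : seq K, uniq s & size s = D.
Proof.
elim: D => [|D [s uniq_s size_s]]; first by exists [::].
by have [t t_s] := infK s; exists (t :: s); rewrite /= ?t_s ?size_s.
Qed.

(* Solve the Vandermonde system by Cramer's rule: det V *: v j = 0 with det V != 0. *)
Lemma vandermonde_extract D (v : nat -> R) :
  (forall c : K, \sum_(j < D) c ^+ j *: v j = 0) -> forall j, (j < D)%N -> v j = 0.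
Proof.
move=> vanish j lt_jD; have [s uniq_s size_s] := infinite_uniq_seq D.
pose V := Vandermonde D (\row_(i < D) s`_i).
have V_v i : \sum_(r < D) V r i *: v r = 0.
  by rewrite -[RHS](vanish s`_i); apply: eq_bigr => r _; rewrite !mxE.
have detV_v : \det V *: v j = 0.
  transitivity (\sum_(r < D) (V *m \adj V) r (Ordinal lt_jD) *: v r).
    rewrite mul_mx_adj (bigD1 (Ordinal lt_jD)) //= big1 ?addr0 => [|r ne_rj].
      by rewrite mxE eqxx mulr1n.
    by rewrite mxE (negbTE ne_rj) mulr0n scale0r.
  under eq_bigr do rewrite mxE scaler_suml.
  rewrite exchange_big big1 // => i _.
  by under eq_bigr do rewrite mulrC -scalerA; rewrite -scaler_sumr V_v scaler0.
have detV_neq0 : \det V != 0.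
  rewrite det_Vandermonde; apply/prodf_neq0 => i _; apply/prodf_neq0 => i' lt_ii'.
  rewrite subr_eq0 !mxE nth_uniq ?size_s //; apply: contraTneq lt_ii' => ->.
  by rewrite ltnn.
by have [/eqP|] := tfR detV_v; first by rewrite (negbTE detV_neq0).
Qed.

End VandermondeExtraction.

Lemma exprDn_ord (B : comNzRingType) (u v : B) i N :
  (i < N)%N -> (u + v) ^+ i = \sum_(c < N) u ^+ (i - c) * v ^+ c *+ 'C(i, c).
Proof.
move=> lt_iN; rewrite exprDn (big_ord_widen N (fun c => u ^+ (i - c) * v ^+ c *+ 'C(i, c)) lt_iN).
by rewrite big_mkcond; apply: eq_bigr => c _; case: ltnP => // /bin_small ->.
Qed.

(* Expansion in powers of X after writing 1 + X s = (1 + X t) + X (s - t). *)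
Lemma binomial_shift_expansion (B : comNzRingType) (a : nat -> B) (s t : B) n :
  \sum_(i < n.+1) (a i * s ^+ i * t ^+ (n - i))%:P *
      (1 + 'X * s%:P) ^+ i * (1 + 'X * t%:P) ^+ (n - i) =
  \sum_(c < n.+1) 'X ^+ c * (1 + 'X * t%:P) ^+ (n - c) *
      ((s - t) ^+ c * \sum_(i < n.+1) a i * 'C(i, c)%:R * s ^+ i * t ^+ (n - i))%:P.
Proof.
have shift : 1 + 'X * s%:P = (1 + 'X * t%:P) + 'X * (s - t)%:P.
  by rewrite rmorphB /=; ring.
under eq_bigr => i _ do rewrite shift (exprDn_ord _ _ (ltn_ord i)) !mulr_sumr mulr_suml.
rewrite exchange_big /=; apply: eq_bigr => c _.
rewrite rmorphM rmorph_sum /= !mulr_sumr; apply: eq_bigr => i _.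
have le_in : (i <= n)%N by rewrite -ltnS.
have [le_ci|lt_ic] := leqP c i; last first.
  by rewrite bin_small // !(mulr0n, mulr0, mul0r, polyC0).
have -> : (n - c = (i - c) + (n - i))%N by lia.
by rewrite !(rmorphM, rmorphXn, rmorphB, rmorph_nat) /= exprD exprMn; ring.
Qed.

Section LeadingCoefficient.
Variables (K : idomainType) (R : lmodType K) (mul : R -> R -> R).
Hypotheses (algR : is_assoc_alg mul) (tfR : torsion_free R) (infK : infinite_type K).
Local Notation A := {poly {poly K}}.

Lemma sandw_null_coef (q : {poly A}) :
  (forall c, sandw_null mul q.[c%:P%:P]) -> forall j, sandw_null mul q`_j.
Proof.
move=> null_q j x y; have [lt_jq|le_qj] := ltnP j (size q); last first.
  by rewrite nth_default // raddf0.
apply: (vandermonde_extract infK tfR (v := fun j => sandw mul x y q`_j)) lt_jq => c.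
rewrite -[RHS](null_q c x y) horner_coef raddf_sum /=; apply: eq_bigr => i _.
by rewrite -!rmorphXn mulrC sandwZ.
Qed.

Variables (m k n : nat) (al : nat -> K).
Hypothesis alpha_null : forall x y, sand mul y m (alpha_poly mul n al x y) k = 0.

Local Notation S := ('X : A).
Local Notation T := ('X%:P : A).
Let M : A := S ^+ m * T ^+ k.
Let ES : {poly A} := 1 + 'X * S%:P.
Let ET : {poly A} := 1 + 'X * T%:P.
(* M * q.[c] encodes the hypothesis with y replaced by y + c y^2. *)
Let q : {poly A} := ES ^+ m * ET ^+ k *
  \sum_(i < n.+1) ((al i)%:P%:P * S ^+ i * T ^+ (n - i))%:P * ES ^+ i * ET ^+ (n - i).

Lemma sandw_null_subst c : sandw_null mul (M * q.[c%:P%:P]).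
Proof.
set LS := S * (1 + c%:P%:P * S); set LT := T * (1 + c%:P%:P * T).
have -> : M * q.[c%:P%:P] = LS ^+ m * LT ^+ k *
    \sum_(i < n.+1) (al i)%:P%:P * (LS ^+ i * LT ^+ (n - i) * 1).
  rewrite /q hornerM mulrA horner_sum; congr (_ * _).
    by rewrite !hornerE /LS /LT /M !exprMn /=; ring.
  by apply: eq_bigr => i _; rewrite !hornerE /LS /LT !exprMn /=; ring.
move=> x y; pose z := y + c *: mul y y.
have sandwL Q : sandw mul x y (LS * Q) = mul z (sandw mul x y Q).
  rewrite /LS mulrDr mulr1 mulrDl -!mulrA raddfD /= !sandw_mulX // sandwZ sandw_mulX //.
  by rewrite (alg_mulDl algR) (alg_scalerAl algR) (alg_scalerAr algR) (alg_mulA algR).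
have sandwR Q : sandw mul x y (LT * Q) = mul (sandw mul x y Q) z.
  rewrite /LT mulrDr mulr1 mulrDl -!mulrA raddfD /= !sandw_mulXC // sandwZ sandw_mulXC //.
  by rewrite (alg_mulDr algR) (alg_scalerAr algR) (alg_scalerAl algR) (alg_mulA algR).
rewrite (sandw_sand algR sandwL sandwR) raddf_sum /= -[RHS](alpha_null x z); congr sand.
apply: eq_bigr => i _; rewrite sandwZ // (sandw_sand algR sandwL sandwR) sandw1 //.
Qed.

Let W c : {poly A} := ES ^+ m * ET ^+ k * ET ^+ (n - c).
Let G c : A := (S - T) ^+ c *
  \sum_(i < n.+1) (al i)%:P%:P * 'C(i, c)%:R * S ^+ i * T ^+ (n - i).

Lemma sandw_null_G c : (c <= n)%N -> sandw_null mul (M * G c).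
Proof.
move=> le_cn; have idM := ideal_mulr_pred (sandw_null_ideal algR) M.
apply: (ideal_unitriangular idM (q := q) (W := W) (G := G) (N := n.+1)) le_cn.
- rewrite /q /ES /ET (binomial_shift_expansion (fun i => (al i)%:P%:P)) mulr_sumr.
  apply: eq_bigr => c' _.
  by rewrite /W /G; ring.
- by move=> c'; rewrite -horner_coef0 /W !hornerE /= !(expr1n, mul0r, addr0, mulr1).
move=> j; have := sandw_null_coef (q := M%:P * q) _ j; rewrite coefCM; apply=> d.
by rewrite hornerCM; apply: sandw_null_subst.
Qed.

Lemma sand_eng_top : al n != 0 -> forall x y, sand mul y (m + n) (eng mul x y n) k = 0.
Proof.
move=> al_n x y.
have MG : M * G n = (al n * (-1) ^+ n)%:P%:P * sand_eng_poly (m + n) k n.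
  rewrite /G big_ord_recr /= big1 => [|i _]; last by rewrite bin_small // mulr0 !mul0r.
  rewrite binn subnn add0r -opprB (exprNn ('X%:P - 'X)) /M /sand_eng_poly.
  by rewrite !(rmorphM, rmorphXn, rmorphN1) /= exprD; ring.
have := sandw_null_G (leqnn n) x y; rewrite MG sandwZ sandw_sand_eng_poly //.
by case/tfR => [/eqP|//]; rewrite mulf_eq0 signr_eq0 orbF (negbTE al_n).
Qed.

End LeadingCoefficient.

Section OppositeAlgebra.
Variables (K : comNzRingType) (R : lmodType K) (mul : R -> R -> R).
Hypothesis algR : is_assoc_alg mul.

Definition mulop (u v : R) : R := mul v u.

Lemma mulop_assoc_alg : is_assoc_alg mulop.
Proof.
split=> [u v w|u v w|u v w|a u v|a u v]; rewrite /mulop.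
- by rewrite (alg_mulA algR).
- exact: (alg_mulDr algR).
- exact: (alg_mulDl algR).
- exact: (alg_scalerAr algR).
- exact: (alg_scalerAl algR).
Qed.

Lemma sand_mulop y i u j : sand mulop y i u j = sand mul y j u i.
Proof.
elim: i => [|i IH]; first by elim: j => //= j ->.
by rewrite (sandSl mulop_assoc_alg) IH sandSr.
Qed.

Lemma eng_mulop x y n : eng mulop x y n = (-1) ^+ n *: eng mul x y n.
Proof.
elim: n => [|n IH]; first by rewrite scale1r.
rewrite /= IH /comm_br /mulop (alg_scalerAr algR) (alg_scalerAl algR) -scalerBr.
by rewrite exprS -scalerA scaleN1r -scalerN opprB.
Qed.

Lemma alpha_poly_mulop n al x y :
  alpha_poly mulop n (fun i => al (n - i)%N) x y = alpha_poly mul n al x y.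
Proof.
rewrite /alpha_poly [RHS](reindex_inj rev_ord_inj) /=; apply: eq_bigr => i _.
by rewrite sand_mulop subSS subKn // -ltnS.
Qed.

End OppositeAlgebra.

Lemma sand_eng_bottom (K : idomainType) (R : lmodType K) (mul : R -> R -> R)
    (algR : is_assoc_alg mul) (tfR : torsion_free R) (infK : infinite_type K)
    (m k n : nat) (al : nat -> K) :
  (forall x y, sand mul y m (alpha_poly mul n al x y) k = 0) ->
  al 0%N != 0 -> forall x y, sand mul y m (eng mul x y n) (n + k) = 0.
Proof.
move=> alpha_null al_0 x y.
have alpha_op_null x' y' :
    sand (mulop mul) y' k (alpha_poly (mulop mul) n (fun i => al (n - i)%N) x' y') m = 0.
  by rewrite (sand_mulop algR) (alpha_poly_mulop algR).
have := sand_eng_top (mulop_assoc_alg algR) tfR infK alpha_op_null.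
rewrite subnn => /(_ al_0 x y).
rewrite (sand_mulop algR) (eng_mulop algR) (sandZ algR) addnC.
by case/tfR => [/eqP|//]; rewrite signr_eq0.
Qed.

Theorem lemma2p3 (K : idomainType) (R : lmodType K) (mul : R -> R -> R)
  (hK : infinite_type K) (hR : is_assoc_alg mul) (htf : torsion_free R)
  (m k n : nat) (al : nat -> K)
  (hyp : forall x y : R, sand mul y m (alpha_poly mul n al x y) k = 0) :
  (al n != 0 -> forall x y : R, sand mul y (m + n) (eng mul x y n) k = 0) /\
  (al 0%N != 0 -> forall x y : R, sand mul y m (eng mul x y n) (n + k) = 0) /\
  (al 0%N != 0 -> al n != 0 -> forall x y : R, sand mul y m (eng mul x y (3 * n - 1)) k = 0).
Proof.
have top := sand_eng_top hR htf hK hyp.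
have bottom := sand_eng_bottom hR htf hK hyp.
split=> //; split=> // al_0 al_n.
have -> : (3 * n - 1 = n + (2 * n).-1)%N by lia.
exact: (sand_eng_addn hR (top al_n) (bottom al_0)).
Qed.
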